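(* For the Bell-state measurement $\Phi=(\Phi^b)_{b=0}^3$ on $\mathbb{C}^2\otimes\mathbb{C}^2$, $Q_{\mathrm{sep}}(\Phi)=\tfrac12$.
   Context: Bell states: $|\Phi^0\rangle=(|00\rangle+|11\rangle)/\sqrt2$, $|\Phi^1\rangle=(|00\rangle-|11\rangle)/\sqrt2$, $|\Phi^2\rangle=(|01\rangle+|10\rangle)/\sqrt2$, $|\Phi^3\rangle=(|01\rangle-|10\rangle)/\sqrt2$, $\Phi^b=|\Phi^b\rangle\langle\Phi^b|$. $Q_{\mathrm{sep}}(\mathscr{P}):=\frac{1}{|B_1'||B_2'|}\max_{\mathscr{F}\in\mathcal{M}_{\mathrm{sep}}}\sum_{j}\operatorname{tr}(F^jP^j)$, where $\mathcal{M}_{\mathrm{sep}}$ is the set of POVMs with the same number of outcomes on $\mathcal{H}_{B_1'}\otimes\mathcal{H}_{B_2'}$ (here $\mathbb{C}^2\otimes\mathbb{C}^2$) whose elements are all separable operators. *)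

(* Complex scalars: an arbitrary numClosedFieldType C
   (e.g. algC, or the genuine complex numbers). *)
From HB Require Import structures.
From mathcomp Require Import all_boot all_order all_algebra.
Set Implicit Arguments. Unset Strict Implicit. Unset Printing Implicit Defensive.
Import Order.TTheory GRing.Theory Num.Theory.
Local Open Scope ring_scope.

Section Defs.
Variable C : numClosedFieldType.

Definition adjmx m n (A : 'M[C]_(m, n)) : 'M[C]_(n, m) := map_mx Num.conj A^T.

Definition psd n (A : 'M[C]_n) : Prop :=
  forall v : 'cV[C]_n, 0 <= (adjmx v *m A *m v) 0 0.

(* Kronecker (tensor) product of two qubit operators on C^2 (x) C^2;
   the basis vector |a b> of C^2 (x) C^2 has index 2*a + b in 'I_(2*2). *)
Definition kron2 (A B : 'M[C]_2) : 'M[C]_(2 * 2) :=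
  \matrix_(i, j) (A (inord (i %/ 2)) (inord (j %/ 2)) *
                  B (inord (i %% 2)) (inord (j %% 2))).

Definition separable (F : 'M[C]_(2 * 2)) : Prop :=
  exists s : seq ('M[C]_2 * 'M[C]_2),
    (forall p, p \in s -> psd p.1 /\ psd p.2) /\
    F = \sum_(p <- s) kron2 p.1 p.2.

Definition sep_POVM (F : 'I_4 -> 'M[C]_(2 * 2)) : Prop :=
  (forall j, psd (F j)) /\ (forall j, separable (F j)) /\ \sum_j F j = 1%:M.

Definition ket (a b : 'I_2) : 'cV[C]_(2 * 2) :=
  \col_(i < 2 * 2) ((i == (2 * a + b)%N :> nat)%:R).

Definition bellv (b : 'I_4) : 'cV[C]_(2 * 2) :=
  match val b with
  | 0 => ket 0 0 + ket 1 1
  | 1 => ket 0 0 - ket 1 1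
  | 2 => ket 0 1 + ket 1 0
  | _ => ket 0 1 - ket 1 0
  end.

(* Bell projectors Phi^b = |Phi^b><Phi^b|, |Phi^b> = bellv b / sqrt 2 *)
Definition Bell (b : 'I_4) : 'M[C]_(2 * 2) :=
  2^-1 *: (bellv b *m adjmx (bellv b)).

(* objective value of a POVM: 1/(|B1'||B2'|) * sum_j tr(F^j Phi^j) *)
Definition sep_value (F : 'I_4 -> 'M[C]_(2 * 2)) : C :=
  (2 * 2)%:R^-1 * \sum_j \tr (F j *m Bell j).

Definition Qsep_Bell_is (q : C) : Prop :=
  (forall F, sep_POVM F -> sep_value F <= q) /\
  (exists F, sep_POVM F /\ sep_value F = q).

End Defs.

(* For positive A, B on C^2 the overlap tr((A (x) B) Phi^0) is half the sum of
   the entrywise products of A and B, and positivity bounds the off-diagonal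
   part: a01 b01 + conj <= a00 b11 + a11 b00, since b11 times the difference is
   A's form at (b11, -b01) plus a11 det B.  The other Bell states reduce to
   Phi^0 by flipping signs of, or swapping, the entries of B.  Hence
   tr(F Phi^j) <= tr F / 2 for every separable F, and summing over a POVM with
   sum 1 of trace 4 gives Q_sep <= 1/2; the computational-basis measurement
   attains it. *)

From HB Require Import structures.
From mathcomp Require Import all_boot all_order all_algebra ring.
Import Order.TTheory GRing.Theory Num.Theory.
Local Open Scope ring_scope.
Set Implicit Arguments. Unset Strict Implicit.

Local Notation i0 := (inord 0 : 'I_2).
Local Notation i1 := (inord 1 : 'I_2).

Lemma big_ord2 (R : nmodType) (F : 'I_2 -> R) : \sum_i F i = F i0 + F i1.
Proof.
rewrite !big_ord_recr big_ord0 /= add0r.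
by congr (F _ + F _); apply/val_inj; rewrite /= inordK.
Qed.

Lemma big_ord4 (R : nmodType) (F : 'I_4 -> R) : \sum_i F i = F 0 + F 1 + F 2 + F 3.
Proof.
rewrite !big_ord_recr big_ord0 /= add0r.
by congr (F _ + F _ + F _ + F _); apply/val_inj.
Qed.

Lemma ord4_ind (P : 'I_4 -> Prop) : P 0 -> P 1 -> P 2 -> P 3 -> forall j, P j.
Proof.
move=> P0 P1 P2 P3 [[|[|[|[|//]]]] hj];
  [rewrite (_ : Ordinal hj = 0) | rewrite (_ : Ordinal hj = 1)
  |rewrite (_ : Ordinal hj = 2) | rewrite (_ : Ordinal hj = 3)] => //; exact: val_inj.
Qed.

Section PsdForm.
Variable C : numClosedFieldType.
Implicit Types a b c d x y : C.

Definition psd_form a b c d := forall x y,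
  0 <= x^* * a * x + x^* * b * y + y^* * c * x + y^* * d * y.

Lemma psd_form_ge0_l a b c d : psd_form a b c d -> 0 <= a.
Proof. by move/(_ 1 0); rewrite rmorph1 rmorph0 !(mul0r, mulr0, addr0, mul1r, mulr1). Qed.

Lemma psd_form_swap a b c d : psd_form a b c d -> psd_form d c b a.
Proof.
move=> h x y; have := h y x.
by congr (0 <= _); ring.
Qed.

Lemma psd_form_ge0_r a b c d : psd_form a b c d -> 0 <= d.
Proof. by move/psd_form_swap/psd_form_ge0_l. Qed.

Lemma psd_form_oppo a b c d : psd_form a b c d -> psd_form a (- b) (- c) d.
Proof.
move=> h x y; have := h x (- y); rewrite rmorphN /=.
by congr (0 <= _); ring.
Qed.

(* The form is real at (1, 1) and (1, 'i), which pins down b + c and b - c. *)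
Lemma psd_form_herm a b c d : psd_form a b c d -> c = b^*.
Proof.
move=> h.
have ra := geC0_conj (psd_form_ge0_l h); have rd := geC0_conj (psd_form_ge0_r h).
have q11 : 0 <= a + d + (b + c).
  by have := h 1 1; rewrite rmorph1; congr (0 <= _); ring.
have q1i : 0 <= a + d + 'i * (b - c).
  have := h 1 'i; rewrite rmorph1 conjCi; congr (0 <= _).
  have i2 : 'i * 'i = -1 :> C by rewrite -expr2 sqrCi.
  by transitivity (a + d + 'i * (b - c) - d * ('i * 'i + 1)); [ring | rewrite i2; ring].
have /addrI E1 : a + d + (b^* + c^*) = a + d + (b + c).
  by rewrite -(geC0_conj q11) !rmorphD /= ra rd.
have E2 : c^* - b^* = b - c.
  have /addrI : a + d + - 'i * (b^* - c^*) = a + d + 'i * (b - c).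
    by rewrite -(geC0_conj q1i) !(rmorphD, rmorphM, rmorphN) /= ra rd conjCi.
  by rewrite mulNr -mulrN opprB => /(mulfI (@neq0Ci C)).
have : c^* = ((b^* + c^*) + (c^* - b^*)) / 2 by field.
by rewrite E1 E2 => cE; rewrite -[c]conjCK cE; congr (_^*); field.
Qed.

Lemma psd_form_det_scaled a b d : psd_form a b b^* d -> 0 <= d * (a * d - b * b^*).
Proof.
move=> h; have := h d (- b^*).
rewrite rmorphN /= conjCK (geC0_conj (psd_form_ge0_r h)).
by congr (0 <= _); ring.
Qed.

(* If d = 0 the scaled bound is trivial: use the symmetric one when a > 0, and
   when a = 0 the form at (1, -b^* ) equals -2 b b^*. *)
Lemma psd_form_det a b d : psd_form a b b^* d -> b * b^* <= a * d.
Proof.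
move=> h; rewrite -subr_ge0.
have [d0 | dn0] := eqVneq d 0; last first.
  have dpos : 0 < d by rewrite lt_def dn0 (psd_form_ge0_r h).
  by rewrite -(pmulr_rge0 _ dpos); apply: psd_form_det_scaled.
subst d; have [a0 | an0] := eqVneq a 0; last first.
  have apos : 0 < a by rewrite lt_def an0 (psd_form_ge0_l h).
  have /psd_form_det_scaled : psd_form 0 b^* b^*^* a.
    by rewrite conjCK; apply: psd_form_swap.
  by rewrite conjCK (mulrC b) !(mulr0, mul0r) sub0r (pmulr_rge0 _ apos).
subst a; rewrite -(pmulr_rge0 _ (ltr0Sn C 1)).
have := h 1 (- b^*); rewrite rmorph1 rmorphN /= conjCK.
by congr (0 <= _); ring.
Qed.

Lemma psd_form_cross_le a0 a1 a3 b0 b1 b3 :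
    psd_form a0 a1 a1^* a3 -> psd_form b0 b1 b1^* b3 ->
  a1 * b1 + a1^* * b1^* <= a0 * b3 + a3 * b0.
Proof.
move=> hA hB; rewrite -subr_ge0.
have ha3 := psd_form_ge0_r hA; have hb0 := psd_form_ge0_l hB.
have [b30 | b3n0] := eqVneq b3 0.
  have b10 : b1 * b1^* == 0.
    by rewrite eq_le mul_conjC_ge0 andbT (le_trans (psd_form_det hB)) // b30 mulr0.
  move: b10; rewrite mul_conjC_eq0 => /eqP ->.
  by rewrite b30 rmorph0 !(mulr0, addr0, add0r, subr0) mulr_ge0.
have b3pos : 0 < b3 by rewrite lt_def b3n0 (psd_form_ge0_r hB).
have := hA b3 (- b1); rewrite rmorphN /= (geC0_conj (ltW b3pos)) => hAv.
rewrite -(pmulr_rge0 _ b3pos).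
have -> : b3 * (a0 * b3 + a3 * b0 - (a1 * b1 + a1^* * b1^*)) =
  (b3 * a0 * b3 + b3 * a1 * - b1 + - b1^* * a1^* * b3 + - b1^* * a3 * - b1)
  + a3 * (b0 * b3 - b1 * b1^*) by ring.
by rewrite addr_ge0 // mulr_ge0 // subr_ge0 psd_form_det.
Qed.

Lemma psd_form_entrywise_le a0 a1 a2 a3 b0 b1 b2 b3 :
    psd_form a0 a1 a2 a3 -> psd_form b0 b1 b2 b3 ->
  a0 * b0 + a1 * b1 + a2 * b2 + a3 * b3 <= (a0 + a3) * (b0 + b3).
Proof.
move=> hA hB; rewrite -subr_ge0.
have ea2 := psd_form_herm hA; have eb2 := psd_form_herm hB; subst a2 b2.
have -> : (a0 + a3) * (b0 + b3) - (a0 * b0 + a1 * b1 + a1^* * b1^* + a3 * b3) =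
  a0 * b3 + a3 * b0 - (a1 * b1 + a1^* * b1^*) by ring.
by rewrite subr_ge0 psd_form_cross_le.
Qed.

End PsdForm.

Section Qubits.
Variable C : numClosedFieldType.

Lemma psd2_psd_form (A : 'M[C]_2) :
  psd A -> psd_form (A i0 i0) (A i0 i1) (A i1 i0) (A i1 i1).
Proof.
move=> h x y; have := h (\col_i (if i == i0 then x else y)).
have i10 : (i1 == i0) = false by rewrite -val_eqE /= !inordK.
rewrite !mxE !big_ord2 !mxE !big_ord2 !mxE eqxx i10 /=.
by congr (0 <= _); ring.
Qed.

Lemma psd_delta n (k : 'I_n) : psd (delta_mx k k : 'M[C]_n).
Proof.
move=> v.
rewrite -(mul_delta_mx (0 : 'I_1)) !mulmxA -colE -mulmxA -rowE !mxE big_ord1 !mxE.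
by rewrite mulrC mul_conjC_ge0.
Qed.

Lemma adjmxD m n (A B : 'M[C]_(m, n)) : adjmx (A + B) = adjmx A + adjmx B.
Proof. by apply/matrixP => i j; rewrite !mxE rmorphD. Qed.

Lemma adjmxN m n (A : 'M[C]_(m, n)) : adjmx (- A) = - adjmx A.
Proof. by apply/matrixP => i j; rewrite !mxE rmorphN. Qed.

Lemma adjmx_delta n (k : 'I_n) : adjmx (delta_mx k 0) = delta_mx 0 k :> 'M[C]_(1, n).
Proof. by apply/matrixP => i j; rewrite !mxE rmorph_nat andbC. Qed.

Lemma delta_mul_mul_delta n (M : 'M[C]_n) (k l : 'I_n) :
  (delta_mx (0 : 'I_1) k *m M *m delta_mx l (0 : 'I_1)) 0 0 = M k l.
Proof. by rewrite -rowE -colE !mxE. Qed.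

Lemma mxtrace_mul_rank1 n (M : 'M[C]_n) (c : C) (u : 'cV_n) :
  \tr (M *m (c *: (u *m adjmx u))) = c * \tr (adjmx u *m M *m u).
Proof. by rewrite -scalemxAr linearZ /= mulmxA mxtrace_mulC mulmxA. Qed.

Lemma ketE (a b : 'I_2) : ket C a b = delta_mx (inord (2 * a + b)) 0.
Proof.
apply/matrixP => i j; rewrite !mxE (ord1 j) eqxx andbT.
have hab : (2 * a + b < 4)%N by case: a b => [[|[|//]] ?] [[|[|//]] ?].
by rewrite -val_eqE /= inordK.
Qed.

Lemma kron2E (A B : 'M[C]_2) (k l : nat) : (k < 4)%N -> (l < 4)%N ->
  kron2 A B (inord k) (inord l) =
  A (inord (k %/ 2)) (inord (l %/ 2)) * B (inord (k %% 2)) (inord (l %% 2)).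
Proof. by move=> hk hl; rewrite mxE !inordK. Qed.

Lemma mxtrace_kron2 (A B : 'M[C]_2) :
  \tr (kron2 A B) = (A i0 i0 + A i1 i1) * (B i0 i0 + B i1 i1).
Proof. by rewrite /mxtrace big_ord4 !mxE /=; ring. Qed.

Lemma kron2_delta (a b : 'I_2) :
  kron2 (delta_mx a a) (delta_mx b b)
  = delta_mx (inord (2 * a + b)) (inord (2 * a + b)) :> 'M[C]_(2 * 2).
Proof.
apply/matrixP => i j; rewrite !mxE -natrM; congr (_ %:R).
have hab : (2 * a + b < 4)%N by case: a b => [[|[|//]] ?] [[|[|//]] ?].
have hi : (i %/ 2 < 2)%N /\ (i %% 2 < 2)%N by case: i => [[|[|[|[|//]]]] ?].
have hj : (j %/ 2 < 2)%N /\ (j %% 2 < 2)%N by case: j => [[|[|[|[|//]]]] ?].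
case: hi hj => hi1 hi2 [hj1 hj2]; rewrite -!val_eqE /= !inordK //.
by case: a b i j {hab hi1 hi2 hj1 hj2} => [[|[|//]] ?] [[|[|//]] ?]
  [[|[|[|[|//]]]] ?] [[|[|[|[|//]]]] ?].
Qed.

Ltac expand_Bell_trace :=
  rewrite /Bell /bellv /= !ketE mxtrace_mul_rank1 ?adjmxD ?adjmxN !adjmx_delta;
  rewrite ?mulmxDl ?mulmxDr ?mulNmx ?mulmxN ?raddfD ?raddfN /= !trace_mx11;
  rewrite !delta_mul_mul_delta !kron2E //=; ring.

Lemma mxtrace_kron2_Bell0 (A B : 'M[C]_2) : \tr (kron2 A B *m Bell C 0) =
  2^-1 * (A i0 i0 * B i0 i0 + A i0 i1 * B i0 i1 + A i1 i0 * B i1 i0 + A i1 i1 * B i1 i1).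
Proof. expand_Bell_trace. Qed.

(* Stated as the Phi^0 formula for B with negated and/or swapped entries. *)
Lemma mxtrace_kron2_Bell1 (A B : 'M[C]_2) : \tr (kron2 A B *m Bell C 1) =
  2^-1 * (A i0 i0 * B i0 i0 + A i0 i1 * - B i0 i1 + A i1 i0 * - B i1 i0 + A i1 i1 * B i1 i1).
Proof. expand_Bell_trace. Qed.

Lemma mxtrace_kron2_Bell2 (A B : 'M[C]_2) : \tr (kron2 A B *m Bell C 2) =
  2^-1 * (A i0 i0 * B i1 i1 + A i0 i1 * B i1 i0 + A i1 i0 * B i0 i1 + A i1 i1 * B i0 i0).
Proof. expand_Bell_trace. Qed.

Lemma mxtrace_kron2_Bell3 (A B : 'M[C]_2) : \tr (kron2 A B *m Bell C 3) =
  2^-1 * (A i0 i0 * B i1 i1 + A i0 i1 * - B i1 i0 + A i1 i0 * - B i0 i1 + A i1 i1 * B i0 i0).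
Proof. expand_Bell_trace. Qed.

Lemma mxtrace_kron2_Bell_le (A B : 'M[C]_2) j : psd A -> psd B ->
  \tr (kron2 A B *m Bell C j) <= 2^-1 * \tr (kron2 A B).
Proof.
move=> /psd2_psd_form hA /psd2_psd_form hB; rewrite mxtrace_kron2.
have half_ge0 : 0 <= 2^-1 :> C by rewrite invr_ge0 ler0n.
have le b0 b1 b2 b3 (hB' : psd_form b0 b1 b2 b3) :=
  ler_wpM2l half_ge0 (psd_form_entrywise_le hA hB').
elim/ord4_ind: j.
- by rewrite mxtrace_kron2_Bell0; apply: le hB.
- by rewrite mxtrace_kron2_Bell1; apply: le (psd_form_oppo hB).
- by rewrite mxtrace_kron2_Bell2 (addrC (B i0 i0)); apply: le (psd_form_swap hB).
- rewrite mxtrace_kron2_Bell3 (addrC (B i0 i0)).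
  by apply: le (psd_form_oppo (psd_form_swap hB)).
Qed.

Lemma separable_mxtrace_Bell_le (F : 'M[C]_(2 * 2)) j : separable F ->
  \tr (F *m Bell C j) <= 2^-1 * \tr F.
Proof.
move=> [s [hs ->]]; rewrite mulmx_suml !linear_sum /= mulr_sumr !big_seq.
by apply: ler_sum => p /hs [hA hB]; apply: mxtrace_kron2_Bell_le.
Qed.

Lemma sep_value_le (F : 'I_4 -> 'M[C]_(2 * 2)) : sep_POVM F -> sep_value F <= 2^-1.
Proof.
move=> [_ [hsep hsum]]; rewrite /sep_value.
have bound : \sum_j \tr (F j *m Bell C j) <= \sum_j 2^-1 * \tr (F j).
  by apply: ler_sum => j _; apply: separable_mxtrace_Bell_le (hsep j).
have total : \sum_j 2^-1 * \tr (F j) = 2^-1 * (2 * 2)%:R.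
  by rewrite -mulr_sumr -linear_sum /= hsum mxtrace1.
rewrite total in bound.
apply: le_trans (ler_wpM2l _ bound) _; first by rewrite invr_ge0 ler0n.
by rewrite mulrCA mulVf ?mulr1 // pnatr_eq0.
Qed.

(* Outcome j is announced when both qubits are measured in the computational
   basis and give a product state occurring in |Phi^j>. *)
Definition Bell_label (j : 'I_4) : 'I_2 * 'I_2 :=
  match val j with 0 => (i0, i0) | 1 => (i1, i1) | 2 => (i0, i1) | _ => (i1, i0) end.

Definition computational_POVM (j : 'I_4) : 'M[C]_(2 * 2) :=
  kron2 (delta_mx (Bell_label j).1 (Bell_label j).1)
        (delta_mx (Bell_label j).2 (Bell_label j).2).

Lemma sep_POVM_computational : sep_POVM computational_POVM.
Proof.
split; [|split] => [j|j|].
- by rewrite /computational_POVM kron2_delta; apply: psd_delta.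
- exists [:: (delta_mx (Bell_label j).1 (Bell_label j).1,
              delta_mx (Bell_label j).2 (Bell_label j).2)].
  split; last by rewrite big_seq1.
  by move=> p; rewrite inE => /eqP ->; split; apply: psd_delta.
- rewrite big_ord4 /computational_POVM /= !kron2_delta.
  apply/matrixP => i j; rewrite !mxE -!val_eqE /= !inordK //.
  by case: i j => [[|[|[|[|//]]]] ?] [[|[|[|[|//]]]] ?] /=; rewrite ?(add0r, addr0).
Qed.

Lemma sep_value_computational : sep_value computational_POVM = 2^-1.
Proof.
have i1_neq_i0 : (i1 == i0) = false by rewrite -val_eqE /= !inordK.
rewrite /sep_value (eq_bigr (fun _ => 2^-1)) => [|j _].
  by rewrite sumr_const card_ord -mulr_natr; field.
elim/ord4_ind: j; rewrite /computational_POVM /= ?(mxtrace_kron2_Bell0,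
  mxtrace_kron2_Bell1, mxtrace_kron2_Bell2, mxtrace_kron2_Bell3).
all: by rewrite !mxE !eqxx ?i1_neq_i0 ?(eq_sym i0 i1) ?i1_neq_i0 /=; ring.
Qed.

End Qubits.

Theorem mainTheorem6 (C : numClosedFieldType) : Qsep_Bell_is (2^-1 : C).
Proof.
split; first exact: sep_value_le.
exists (@computational_POVM C).
by split; [apply: sep_POVM_computational | apply: sep_value_computational].
Qed.
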